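(* Let $\mathcal{O}$ be a nonempty set of quantum channels on $n$ qubits closed under composition, $\Psi$ a channel on $n$ qubits with $\gamma(\Psi)<\infty$, and $k\ge0$ an integer. Then for every sample $S=(z_1,\ldots,z_m)$, \[ \bar{R}_S(\mathcal{F}(\mathcal{O}))\le\bar{R}_S(\mathcal{F}(\mathcal{O}^{(k)}_\Psi))\le\gamma^*\bar{R}_S(\mathcal{F}(\mathcal{O})),\qquad \bar{G}_S(\mathcal{F}(\mathcal{O}))\le\bar{G}_S(\mathcal{F}(\mathcal{O}^{(k)}_\Psi))\le\gamma^*\bar{G}_S(\mathcal{F}(\mathcal{O})), \] where $\gamma^*=\min\{(1+2\gamma(\Psi))^k,1+2\gamma_{\max,n}\}$.
   Context: A quantum channel on $n$ qubits is a completely positive trace-preserving linear map on $2^n\times2^n$ complex matrices. For a channel $\Phi$, $f_\Phi(x,y)=\mathrm{Tr}[\Phi(|x\rangle\langle x|)\,|y\rangle\langle y|]$; $\mathcal{F}(\Omega)=\{f_\Phi:\Phi\in\Omega\}$. $\bar{R}_S(\mathcal{G})=\mathbb{E}\sup_{h\in\mathcal{G}}\frac1m|\sum_{i=1}^m\epsilon_i h(z_i)|$ with $\epsilon_i$ i.i.d. uniform on $\{\pm1\}$, and $\bar{G}_S(\mathcal{G})=\mathbb{E}\sup_{h\in\mathcal{G}}\frac1m|\sum_{i=1}^m g_i h(z_i)|$ with $g_i$ i.i.d. $\mathcal{N}(0,1)$. Free robustness w.r.t. $\mathcal{O}$: $\gamma(\Phi)=\inf\{\lambda\ge0:\exists\,\Phi'\in\mathrm{Conv}(\mathcal{O}),\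 (\Phi+\lambda\Phi')/(1+\lambda)\in\mathrm{Conv}(\mathcal{O})\}$; $\gamma_{\max,n}=\sup$ of $\gamma(\Phi)$ over all channels on $n$ qubits (if infinite, $\gamma^*=(1+2\gamma(\Psi))^k$). $\mathcal{O}^{(k)}_\Psi$ is the set of all finite compositions of elements of $\mathcal{O}\cup\{\Psi\}$ in which $\Psi$ appears at most $k$ times. *)

From HB Require Import structures.
From mathcomp Require Import all_boot all_order all_algebra.
From mathcomp Require Import all_classical all_reals all_analysis.
From mathcomp Require Import complex.
Set Implicit Arguments. Unset Strict Implicit. Unset Printing Implicit Defensive.
Import Order.TTheory GRing.Theory Num.Theory.
Local Open Scope classical_set_scope.
Local Open Scope ring_scope.
Local Open Scope complex_scope.

(* Linear maps on N x N complex matrices (N = 2^n for n qubits);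
   complex numbers are R[i] for a real field R. *)
Definition qmap (R : realType) (N : nat) := 'M[R[i]]_N -> 'M[R[i]]_N.

Definition psd (R : realType) (T : finType) (A : T -> T -> R[i]) : Prop :=
  forall v : T -> R[i], 0 <= \sum_i \sum_j (v i)^* * A i j * v j.

(* (id_k \otimes Phi) acting on M_k \otimes M_N, elements of which are
   matrices indexed by 'I_k * 'I_N, applying Phi blockwise *)
Definition ampl (R : realType) (N k : nat) (Phi : qmap R N)
  (X : 'I_k * 'I_N -> 'I_k * 'I_N -> R[i]) : 'I_k * 'I_N -> 'I_k * 'I_N -> R[i] :=
  fun p q => Phi (\matrix_(i, j) X (p.1, i) (q.1, j)) p.2 q.2.

Definition is_linear_map (R : realType) (N : nat) (Phi : qmap R N) : Prop :=
  forall (a : R[i]) (X Y : 'M[R[i]]_N), Phi (a *: X + Y) = a *: Phi X + Phi Y.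

Definition completely_positive (R : realType) (N : nat) (Phi : qmap R N) : Prop :=
  forall (k : nat) (X : 'I_k * 'I_N -> 'I_k * 'I_N -> R[i]),
    psd X -> psd (ampl Phi X).

Definition trace_preserving (R : realType) (N : nat) (Phi : qmap R N) : Prop :=
  forall X : 'M[R[i]]_N, \tr (Phi X) = \tr X.

Definition channel (R : realType) (N : nat) (Phi : qmap R N) : Prop :=
  [/\ is_linear_map Phi, completely_positive Phi & trace_preserving Phi].

Definition conv (R : realType) (N : nat) (O : set (qmap R N)) : set (qmap R N) :=
  [set Phi | exists (p : nat) (w : 'I_p -> R) (Phis : 'I_p -> qmap R N),
     [/\ forall i, 0 <= w i, \sum_i w i = 1, forall i, O (Phis i) &
         Phi = fun X => \sum_i (w i)%:C *: Phis i X]].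

(* free robustness of Phi w.r.t. O (inf of the empty set is +oo) *)
Definition robustness (R : realType) (N : nat) (O : set (qmap R N)) (Phi : qmap R N)
  : \bar R :=
  ereal_inf [set l%:E | l in [set l : R | 0 <= l /\
     exists Phi', conv O Phi' /\
       conv O (fun X => ((1 + l)^-1)%:C *: (Phi X + l%:C *: Phi' X))]].

Definition gamma_max (R : realType) (N : nat) (O : set (qmap R N)) : \bar R :=
  ereal_sup [set robustness O Phi | Phi in [set Phi : qmap R N | channel Phi]].

(* gamma^* = min{(1+2 gamma(Psi))^k, 1 + 2 gamma_max} (used when gamma(Psi) < oo) *)
Definition gamma_star (R : realType) (N : nat) (O : set (qmap R N)) (Psi : qmap R N)
  (k : nat) : \bar R :=
  mine (((1 + 2 * fine (robustness O Psi)) ^+ k)%:E) (1 + 2 * gamma_max O)%E.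

(* O^{(k)}_Psi : nonempty finite compositions of elements of O u {Psi}, where
   each factor is tagged Some phi (phi in O) or None (an occurrence of Psi),
   with at most k occurrences of Psi *)
Definition compose_seq (R : realType) (N : nat) (Psi : qmap R N)
  (s : seq (option (qmap R N))) : qmap R N :=
  foldr (fun o acc => (if o is Some phi then phi else Psi) \o acc) id s.

Definition Ok (R : realType) (N : nat) (O : set (qmap R N)) (Psi : qmap R N)
  (k : nat) : set (qmap R N) :=
  [set Phi | exists s : seq (option (qmap R N)),
     [/\ (0 < size s)%N,
         (forall i, (i < size s)%N -> if nth None s i is Some phi then O phi else True),
         (count (fun o => if o is None then true else false) s <= k)%N &
         Phi = compose_seq Psi s]].

(* f_Phi(x,y) = Tr[Phi(|x><x|) |y><y|] = Phi(E_xx)_{yy} (a real number for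
   channels; we take its real part) *)
Definition fPhi (R : realType) (N : nat) (Phi : qmap R N) : 'I_N * 'I_N -> R :=
  fun z => complex.Re (Phi (delta_mx z.1 z.1) z.2 z.2).

Definition Fcls (R : realType) (N : nat) (O : set (qmap R N)) : set ('I_N * 'I_N -> R) :=
  [set fPhi Phi | Phi in O].

Definition rademacher (R : realType) (T : Type) (m : nat) (S : 'I_m -> T)
  (G : set (T -> R)) : \bar R :=
  (((2 ^ m)%:R : R)^-1)%:E *
  (\sum_(eps : {ffun 'I_m -> bool})
     ereal_sup [set ((m%:R)^-1 * `|\sum_(i < m) (-1) ^+ eps i * h (S i)|)%:E
               | h in G])%E.

(* expectation over i.i.d. standard Gaussians g_0, ..., g_{m-1}
   (iterated integrals against the N(0,1) law) *)
Fixpoint gauss_exp (R : realType) (m : nat) (F : (nat -> R) -> \bar R) : \bar R :=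
  match m with
  | 0 => F (fun _ => 0)
  | m'.+1 => (\int[normal_prob 0 1]_x
                gauss_exp m' (fun g => F (fun i => if i is j.+1 then g j else x)))%E
  end.

Definition gaussian (R : realType) (T : Type) (m : nat) (S : 'I_m -> T)
  (G : set (T -> R)) : \bar R :=
  gauss_exp m (fun g =>
     ereal_sup [set ((m%:R)^-1 * `|\sum_(i < m) g i * h (S i)|)%:E | h in G]).

(* Call Phi c-decomposable when it is a real
   combination sum_j a_j Phi_j of free channels Phi_j in O with sum_j |a_j| <= c.
   Decomposability is preserved by sums, scalings and (since O is closed under
   composition and consists of linear maps) by composition, with the weights
   adding resp. multiplying; a robustness witness for lambda shows that Phi is
   (1 + 2 lambda)-decomposable.  Hence every element of O^(k)_Psi is
   (1 + 2 lambda)^k-decomposable for every lambda > gamma(Psi), and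
   (1 + 2 lambda)-decomposable for every lambda > gamma_max.  Any functional
   L that is linear along such combinations then satisfies
   |L Phi| <= c * sup_O |L|, and letting lambda decrease (by continuity) gives
   the factor gamma^*.  Applied to the correlations
   m^-1 |sum_i a_i f_Phi(z_i)| this bounds the suprema inside both
   complexities; the Rademacher average is a finite positive combination and
   the Gaussian expectation is a monotone, positively homogeneous iterated
   integral (we use the integral of nonnegative functions through its
   definition by simple functions, so no measurability is needed), which
   yields the two sandwich inequalities. *)

From Pilot Require Import Defs.
From HB Require Import structures.
From mathcomp Require Import all_boot all_order all_algebra.
From mathcomp Require Import all_classical all_reals all_analysis.
From mathcomp Require Import complex.
From mathcomp Require Import ring lra.
From Stdlib Require List.
Set Implicit Arguments. Unset Strict Implicit. Unset Printing Implicit Defensive.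
Import Order.TTheory GRing.Theory Num.Theory numFieldNormedType.Exports.
Local Open Scope classical_set_scope.
Local Open Scope ring_scope.
Local Open Scope complex_scope.

Lemma Re_add (R : realType) (x y : R[i]) :
  complex.Re (x + y) = complex.Re x + complex.Re y.
Proof. by case: x; case: y. Qed.

Lemma Re_realM (R : realType) (r : R) (x : R[i]) :
  complex.Re (r%:C * x) = r * complex.Re x.
Proof. by case: x => a b /=; rewrite mul0r subr0. Qed.

Section LinearMaps.
Variables (R : realType) (N : nat) (Phi : qmap R N).
Hypothesis Phi_lin : is_linear_map Phi.

Lemma lin0 : Phi 0 = 0.
Proof.
have := Phi_lin 1 0 0; rewrite !scale1r addr0 => e.
by apply: (addrI (Phi 0)); rewrite addr0 -e.
Qed.

Lemma linZ a X : Phi (a *: X) = a *: Phi X.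
Proof. by have := Phi_lin a X 0; rewrite lin0 !addr0. Qed.

Lemma linD X Y : Phi (X + Y) = Phi X + Phi Y.
Proof. by have := Phi_lin 1 X Y; rewrite !scale1r. Qed.

Lemma lin_sum (I : Type) (s : seq I) (F : I -> 'M[R[i]]_N) :
  Phi (\sum_(x <- s) F x) = \sum_(x <- s) Phi (F x).
Proof.
elim: s => [|x s IH]; first by rewrite !big_nil lin0.
by rewrite !big_cons linD IH.
Qed.

End LinearMaps.

Section Decomposition.
Variables (R : realType) (N : nat) (O : set (qmap R N)).

Definition lincomb (s : seq (R * qmap R N)) : qmap R N :=
  fun X => \sum_(x <- s) (x.1)%:C *: x.2 X.

Definition weight (s : seq (R * qmap R N)) : R := \sum_(x <- s) `|x.1|.

Definition decomposable (c : R) (Phi : qmap R N) : Prop :=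
  exists s, [/\ forall x, List.In x s -> O x.2, weight s <= c & Phi = lincomb s].

Lemma weight_ge0 s : 0 <= weight s.
Proof. exact: sumr_ge0. Qed.

Lemma decomposable_le c c' Phi :
  decomposable c Phi -> c <= c' -> decomposable c' Phi.
Proof. by move=> [s [sO sc ->]] cc'; exists s; split => //; apply: le_trans cc'. Qed.

Lemma decomposable_free Phi : O Phi -> decomposable 1 Phi.
Proof.
move=> OPhi; exists [:: (1, Phi)]; split; first by move=> x [<-|].
  by rewrite /weight big_seq1 normr1.
by apply: funext => X; rewrite /lincomb big_seq1 /= scale1r.
Qed.

Lemma decomposable_scale c Phi r :
  decomposable c Phi -> decomposable (`|r| * c) (fun X => r%:C *: Phi X).
Proof.
move=> [s [sO sc ->]]; exists [seq (r * x.1, x.2) | x <- s]; split.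
- by move=> x /List.in_map_iff [y [<- ys]] /=; exact: sO.
- rewrite /weight big_map; under eq_bigr do rewrite normrM.
  by rewrite -mulr_sumr ler_wpM2l.
- apply: funext => X; rewrite /lincomb big_map scaler_sumr.
  by apply: eq_bigr => x _ /=; rewrite rmorphM scalerA.
Qed.

Lemma decomposable_add c1 c2 Phi1 Phi2 :
  decomposable c1 Phi1 -> decomposable c2 Phi2 ->
  decomposable (c1 + c2) (fun X => Phi1 X + Phi2 X).
Proof.
move=> [s1 [s1O s1c ->]] [s2 [s2O s2c ->]]; exists (s1 ++ s2); split.
- by move=> x /List.in_app_iff [] ?; [exact: s1O | exact: s2O].
- by rewrite /weight big_cat lerD.
- by apply: funext => X; rewrite /lincomb big_cat.
Qed.

Lemma decomposable_conv Phi : Defs.conv O Phi -> decomposable 1 Phi.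
Proof.
move=> [p [w [Phis [w0 w1 PhisO ->]]]].
exists [seq (w i, Phis i) | i <- enum 'I_p]; split.
- by move=> x /List.in_map_iff [i [<- _]] /=.
- rewrite /weight big_map big_enum /= -w1; apply: ler_sum => i _.
  by rewrite ger0_norm.
- by apply: funext => X; rewrite /lincomb big_map big_enum.
Qed.

(* If (Phi + l Phi') / (1 + l) and Phi' lie in conv O, then
   Phi = (1 + l) * mixture - l * Phi' is (1 + 2 l)-decomposable. *)
Lemma decomposable_robustness_witness (Phi Phi' : qmap R N) (l : R) : 0 <= l ->
  Defs.conv O Phi' ->
  Defs.conv O (fun X => ((1 + l)^-1)%:C *: (Phi X + l%:C *: Phi' X)) ->
  decomposable (1 + 2 * l) Phi.
Proof.
move=> l0 Phi'O mixO.
have := decomposable_add (decomposable_scale (1 + l) (decomposable_conv mixO))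
  (decomposable_scale (- l) (decomposable_conv Phi'O)).
have -> : `|1 + l| * 1 + `|- l| * 1 = 1 + 2 * l.
  by rewrite normrN !mulr1 !ger0_norm ?addr_ge0 //; ring.
congr decomposable; apply: funext => X.
rewrite scalerA -rmorphM mulfV ?gt_eqF ?ltr_wpDr //.
by rewrite rmorph1 scale1r rmorphN scaleNr addrK.
Qed.

(* Composition of decompositions needs O to consist of linear maps closed
   under composition. *)
Hypothesis O_lin : forall Phi, O Phi -> is_linear_map Phi.
Hypothesis O_comp : forall Phi1 Phi2, O Phi1 -> O Phi2 -> O (Phi1 \o Phi2).

(* Membership in a list of all pairs, for lists over types without
   decidable equality. *)
Lemma in_allpairs (A B C : Type) (f : A -> B -> C) s t z :
  List.In z [seq f x y | x <- s, y <- t] ->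
  exists x y, [/\ List.In x s, List.In y t & z = f x y].
Proof.
elim: s => [|x s IH] //= /List.in_app_iff [/List.in_map_iff [y [<- ty]] | /IH].
  by exists x, y; split => //; left.
by move=> [x' [y [sx' ty ->]]]; exists x', y; split => //; right.
Qed.

Lemma lincomb_comp s1 s2 : (forall x, List.In x s1 -> O x.2) ->
  lincomb s1 \o lincomb s2 =
  lincomb [seq (x.1 * y.1, x.2 \o y.2) | x <- s1, y <- s2].
Proof.
move=> s1O; apply: funext => X; rewrite /lincomb /= big_allpairs_dep.
elim: s1 s1O => [|x s1 IH] s1O; first by rewrite !big_nil.
rewrite !big_cons IH => [|z zs1]; last by apply: s1O; right.
have x_lin : is_linear_map x.2 by apply/O_lin/s1O; left.
congr (_ + _); rewrite lin_sum // scaler_sumr; apply: eq_bigr => y _.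
by rewrite linZ // scalerA rmorphM.
Qed.

Lemma decomposable_comp c1 c2 Phi1 Phi2 :
  decomposable c1 Phi1 -> decomposable c2 Phi2 ->
  decomposable (c1 * c2) (Phi1 \o Phi2).
Proof.
move=> [s1 [s1O s1c ->]] [s2 [s2O s2c ->]].
exists [seq (x.1 * y.1, x.2 \o y.2) | x <- s1, y <- s2]; split.
- move=> z zin; have [x [y [xs1 ys2 ->]]] := in_allpairs zin.
  by apply: O_comp; [exact: s1O | exact: s2O].
- apply: le_trans (ler_pM (weight_ge0 _) (weight_ge0 _) s1c s2c).
  rewrite /weight big_allpairs_dep mulr_suml; apply: ler_sum => x _.
  by rewrite mulr_sumr; apply: ler_sum => y _; rewrite normrM.
- exact: lincomb_comp.
Qed.

Definition is_Psi (o : option (qmap R N)) : bool := if o is None then true else false.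

Lemma decomposable_compose_seq (Psi : qmap R N) (c : R) s :
  decomposable c Psi -> (0 < size s)%N ->
  (forall i, (i < size s)%N -> if nth None s i is Some phi then O phi else True) ->
  decomposable (c ^+ count is_Psi s) (compose_seq Psi s).
Proof.
move=> Psi_c; elim: s => [|o s IH] //= _ sO.
have {}IH : (0 < size s)%N -> decomposable (c ^+ count is_Psi s) (compose_seq Psi s).
  by move=> s0; apply: IH => // i; apply: (sO i.+1).
case: o sO => [phi|] sO /=.
- have phi_1 := decomposable_free (sO 0%N isT).
  rewrite add0n; case: s {sO} IH => [|o' s'] IH; first by rewrite expr0.
  by rewrite -[_ ^+ _]mul1r; apply: decomposable_comp phi_1 (IH isT).
- rewrite add1n exprS; case: s {sO} IH => [|o' s'] IH; first by rewrite expr0 mulr1.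
  exact: decomposable_comp Psi_c (IH isT).
Qed.

Lemma decomposable_Ok (Psi : qmap R N) (c : R) k Phi : 1 <= c ->
  decomposable c Psi -> Ok O Psi k Phi -> decomposable (c ^+ k) Phi.
Proof.
move=> c1 Psi_c [s [s0 sO sk ->]].
by apply: decomposable_le (decomposable_compose_seq Psi_c s0 sO) (ler_weXn2l c1 sk).
Qed.

End Decomposition.

Section Robustness.
Variables (R : realType) (N : nat) (O : set (qmap R N)).

Lemma robustness_ge0 Phi : (0 <= robustness O Phi)%E.
Proof. by apply/ereal_infP => _ [l [l0 _] <-]; rewrite lee_fin. Qed.

Lemma decomposable_above_robustness Phi (l : R) : (robustness O Phi < l%:E)%E ->
  decomposable O (1 + 2 * l) Phi.
Proof.
move=> /ereal_inf_lt [_ [l' [l'0 [Phi' [Phi'O mixO]]] <-]]; rewrite lte_fin => l'l.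
apply: decomposable_le (decomposable_robustness_witness l'0 Phi'O mixO) _.
by rewrite lerD2l ler_wpM2l // ltW.
Qed.

Lemma decomposable_of_robustness_le Phi (b c : R) :
  (robustness O Phi <= b%:E)%E -> 1 + 2 * b < c -> decomposable O c Phi.
Proof.
move=> Phi_b bc; have -> : c = 1 + 2 * ((c - 1) / 2) by field.
apply: decomposable_above_robustness; apply: le_lt_trans Phi_b _.
by rewrite lte_fin; lra.
Qed.

End Robustness.

Lemma le_right_limit (R : realType) (f : R -> R) (a x : R) :
  {for a, continuous f} -> (forall t, a < t -> x <= f t) -> x <= f a.
Proof.
move=> fa xf; have fa_right : f t @[t --> a^'+] --> f a by exact: cvg_within_filter.
apply: (cvgr_to_ge fa_right); near=> t; apply: xf; near: t; exact: nbhs_right_gt.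
Unshelve. all: by end_near.
Qed.

Section LinearFunctionals.
Variables (R : realType) (N : nat) (O : set (qmap R N)).

Definition comb_linear (L : qmap R N -> R) : Prop :=
  forall s, L (lincomb s) = \sum_(x <- s) x.1 * L x.2.

Lemma decomposable_functional_bound (L : qmap R N -> R) c Phi A : 0 <= A ->
  comb_linear L -> (forall Phi', O Phi' -> `|L Phi'| <= A) ->
  decomposable O c Phi -> `|L Phi| <= c * A.
Proof.
move=> A0 L_lin L_A [s [sO sc ->]]; rewrite L_lin.
apply: le_trans (_ : weight s * A <= c * A); last by rewrite ler_wpM2r.
rewrite /weight mulr_suml; elim: s sO {sc} => [|x s IH] sO.
  by rewrite !big_nil normr0.
rewrite !big_cons; apply: le_trans (ler_normD _ _) _; apply: lerD.
  by rewrite normrM ler_wpM2l // L_A //; apply: sO; left.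
by apply: IH => y ys; apply: sO; right.
Qed.

Lemma functional_bound_pow (L : qmap R N -> R) (b : R) k Phi A : 0 <= A ->
  comb_linear L -> (forall Phi', O Phi' -> `|L Phi'| <= A) ->
  (forall c, b < c -> decomposable O (c ^+ k) Phi) -> `|L Phi| <= b ^+ k * A.
Proof.
move=> A0 L_lin L_A Phi_dec.
apply: (@le_right_limit _ (fun c => c ^+ k * A)).
  by apply: continuousM; [exact: exprn_continuous | exact: cvg_cst].
by move=> c bc; apply: decomposable_functional_bound (Phi_dec c bc).
Qed.

End LinearFunctionals.

Lemma fPhi_lincomb (R : realType) (N : nat) (s : seq (R * qmap R N)) z :
  fPhi (lincomb s) z = \sum_(x <- s) x.1 * fPhi x.2 z.
Proof.
have Re0 : complex.Re (0 : R[i]) = 0 by [].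
rewrite /fPhi /lincomb summxE (big_morph _ (@Re_add R) Re0).
by apply: eq_bigr => x _; rewrite mxE Re_realM.
Qed.

(* Channels are closed under composition, since the amplification
   id (x) Phi is multiplicative. *)
Lemma ampl_comp (R : realType) (N k : nat) (Phi1 Phi2 : qmap R N)
  (X : 'I_k * 'I_N -> 'I_k * 'I_N -> R[i]) :
  ampl (Phi1 \o Phi2) X = ampl Phi1 (ampl Phi2 X).
Proof.
apply: funext => p; apply: funext => q; rewrite /ampl /=.
congr (Phi1 _ _ _); apply/matrixP => i j; rewrite !mxE /=.
by congr (Phi2 _ _ _); apply/matrixP => i' j'; rewrite !mxE.
Qed.

Lemma channel_comp (R : realType) (N : nat) (Phi1 Phi2 : qmap R N) :
  channel Phi1 -> channel Phi2 -> channel (Phi1 \o Phi2).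
Proof.
move=> [lin1 cp1 tp1] [lin2 cp2 tp2]; split.
- by move=> a X Y /=; rewrite lin2 lin1.
- by move=> k X X_psd; rewrite ampl_comp; apply/cp1/cp2.
- by move=> X /=; rewrite tp1 tp2.
Qed.

Section Compositions.
Variables (R : realType) (N : nat) (O : set (qmap R N)) (Psi : qmap R N) (k : nat).

Lemma free_in_Ok : O `<=` Ok O Psi k.
Proof. by move=> Phi OPhi; exists [:: Some Phi]; split => // -[]. Qed.

Lemma Ok_channel Phi : (forall Phi', O Phi' -> channel Phi') -> channel Psi ->
  Ok O Psi k Phi -> channel Phi.
Proof.
move=> O_ch Psi_ch [s [s0 sO _ ->]]; elim: s s0 sO => [|o s IH] //= _ sO.
have o_ch : channel (if o is Some phi then phi else Psi).
  by case: o sO => [phi|] sO //; apply/O_ch/(sO 0%N isT).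
case: s {sO} IH (fun i => sO i.+1) => [|o' s'] IH sO //.
by apply: channel_comp o_ch (IH isT sO).
Qed.

End Compositions.

(* Monotonicity and positive homogeneity of the integral of nonnegative
   (not necessarily measurable) functions, from its definition as a
   supremum of integrals of simple functions. *)
Section NonnegIntegral.
Local Open Scope ereal_scope.
Import HBNNSimple.
Context d (T : measurableType d) (R : realType) (mu : {measure set T -> \bar R}).

Lemma ge0_integral_le (f g : T -> \bar R) : (forall x, 0 <= f x) ->
  (forall x, f x <= g x) -> \int[mu]_x f x <= \int[mu]_x g x.
Proof.
move=> f0 fg; have g0 x : 0 <= g x by exact: le_trans (f0 x) (fg x).
rewrite !ge0_integralTE //; apply: ereal_sup_le => _ [h hf <-].
by exists h => // x; exact: le_trans (hf x) (fg x).
Qed.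

Lemma ge0_integralZl_le (f : T -> \bar R) (c : R) : (0 < c)%R ->
  (forall x, 0 <= f x) -> \int[mu]_x (c%:E * f x) <= c%:E * \int[mu]_x f x.
Proof.
move=> c0 f0; have cf0 x : 0 <= c%:E * f x by rewrite mule_ge0 // lee_fin ltW.
rewrite !ge0_integralTE //; apply: ge_ereal_sup => _ [h hcf <-].
have c'0 : (0 <= c^-1)%R by rewrite invr_ge0 ltW.
pose h' := scale_nnsfun h c'0.
have h'f x : (h' x)%:E <= f x.
  move: (hcf x) (f0 x); rewrite /h' /=.
  case: (f x) => [r||] //= hr _; last by rewrite leey.
  by rewrite lee_fin mulrC ler_pdivrMr // mulrC -lee_fin.
have -> : sintegral mu h = c%:E * sintegral mu h'.
  rewrite -sintegralrM; apply: eq_sintegral => x /=.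
  by rewrite /h' /= mulrA mulfV ?mul1r // gt_eqF.
apply: lee_wpmul2l; first by rewrite lee_fin ltW.
by apply: ereal_sup_ubound; exists h'.
Qed.

End NonnegIntegral.

Section GaussianExpectation.
Local Open Scope ereal_scope.
Variable R : realType.

Lemma gauss_exp_ge0 m (F : (nat -> R) -> \bar R) : (forall g, 0 <= F g) ->
  0 <= gauss_exp m F.
Proof.
elim: m F => [|m IH] F F0 /=; first exact: F0.
by apply: integral_ge0 => x _; apply: IH => g; exact: F0.
Qed.

Lemma gauss_exp_le m (F G : (nat -> R) -> \bar R) : (forall g, 0 <= F g) ->
  (forall g, F g <= G g) -> gauss_exp m F <= gauss_exp m G.
Proof.
elim: m F G => [|m IH] F G F0 FG /=; first exact: FG.
apply: ge0_integral_le => x; first by apply: gauss_exp_ge0 => g; exact: F0.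
by apply: IH => g; [exact: F0 | exact: FG].
Qed.

Lemma gauss_exp_scale m (F : (nat -> R) -> \bar R) (c : R) : (0 < c)%R ->
  (forall g, 0 <= F g) -> gauss_exp m (fun g => c%:E * F g) <= c%:E * gauss_exp m F.
Proof.
move=> c0; elim: m F => [|m IH] F F0 //=.
apply: le_trans (ge0_integralZl_le _ c0 _); last first.
  by move=> x; apply: gauss_exp_ge0 => g; exact: F0.
apply: ge0_integral_le => x; last by apply: IH => g; exact: F0.
by apply: gauss_exp_ge0 => g; rewrite mule_ge0 // lee_fin ltW.
Qed.

End GaussianExpectation.

Section Complexities.
Variables (R : realType) (T : Type) (m : nat) (S : 'I_m -> T).

Definition corr (a : 'I_m -> R) (h : T -> R) : R :=
  (m%:R)^-1 * `|\sum_(i < m) a i * h (S i)|.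

Definition sup_corr (a : 'I_m -> R) (G : set (T -> R)) : \bar R :=
  ereal_sup [set (corr a h)%:E | h in G].

Lemma corr_ge0 a h : 0 <= corr a h.
Proof. by rewrite mulr_ge0 ?invr_ge0. Qed.

Lemma sup_corr_ge0 a G : G !=set0 -> (0 <= sup_corr a G)%E.
Proof.
move=> [h Gh]; apply: le_trans (ereal_sup_ubound _); last by exists h.
by rewrite lee_fin corr_ge0.
Qed.

Lemma sup_corr_mono a G G' : G `<=` G' -> (sup_corr a G <= sup_corr a G')%E.
Proof.
by move=> GG'; apply: ereal_sup_le => _ [h Gh <-]; exists h => //; apply: GG'.
Qed.

Lemma sup_corr_le_scale a G G' (g : R) : G !=set0 -> 0 < g ->
  (forall h', G' h' -> forall A, 0 <= A -> (forall h, G h -> corr a h <= A) ->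
     corr a h' <= g * A) ->
  (sup_corr a G' <= g%:E * sup_corr a G)%E.
Proof.
move=> G0 g0 G'_le; have := sup_corr_ge0 a G0.
case E : (sup_corr a G) => [A||] // A0.
- apply: ge_ereal_sup => _ [h' G'h' <-]; rewrite -EFinM lee_fin.
  apply: G'_le => // h Gh.
  by rewrite -lee_fin -E; apply: ereal_sup_ubound; exists h.
- by rewrite gt0_muley ?leey // lte_fin.
Qed.

Lemma rademacherE (G : set (T -> R)) : rademacher S G =
  ((((2 ^ m)%:R : R)^-1)%:E * \sum_(eps : {ffun 'I_m -> bool})
     sup_corr (fun i => ((-1) ^+ eps i)%R) G)%E.
Proof. by []. Qed.

Lemma gaussianE (G : set (T -> R)) :
  gaussian S G = gauss_exp m (fun g => sup_corr (fun i => g i) G).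
Proof. by []. Qed.


Lemma rademacher_sandwich (G G' : set (T -> R)) (g : R) :
  G !=set0 -> G `<=` G' ->
  (forall a, (sup_corr a G' <= g%:E * sup_corr a G)%E) ->
  (rademacher S G <= rademacher S G')%E /\
  (rademacher S G' <= g%:E * rademacher S G)%E.
Proof.
move=> G0 GG' G'_le; rewrite !rademacherE.
have c0 : (0 <= (((2 ^ m)%:R : R)^-1)%:E)%E by rewrite lee_fin invr_ge0.
split.
  by apply: lee_wpmul2l => //; apply: lee_sum => eps _; apply: sup_corr_mono.
have sum_le : (\sum_(eps : {ffun 'I_m -> bool}) sup_corr (fun i => ((-1) ^+ eps i)%R) G'
    <= \sum_(eps : {ffun 'I_m -> bool}) g%:E * sup_corr (fun i => ((-1) ^+ eps i)%R) G)%E.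
  by apply: lee_sum => eps _; apply: G'_le.
rewrite muleCA [X in (_ <= _ * X)%E]ge0_sume_distrr; last first.
  by move=> eps _; exact: sup_corr_ge0.
by apply: (lee_wpmul2l c0); exact: sum_le.
Qed.

Lemma gaussian_sandwich (G G' : set (T -> R)) (g : R) :
  G !=set0 -> G `<=` G' -> 0 < g ->
  (forall a, (sup_corr a G' <= g%:E * sup_corr a G)%E) ->
  (gaussian S G <= gaussian S G')%E /\
  (gaussian S G' <= g%:E * gaussian S G)%E.
Proof.
move=> G0 GG' g0 G'_le; rewrite !gaussianE; split.
  by apply: gauss_exp_le => a; [exact: sup_corr_ge0 | exact: sup_corr_mono].
apply: le_trans (gauss_exp_scale _ g0 (fun a => sup_corr_ge0 _ G0)).
apply: gauss_exp_le => a; last exact: G'_le.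
exact: le_trans (sup_corr_ge0 _ G0) (sup_corr_mono _ GG').
Qed.

End Complexities.

Section CorrelationFunctional.
Variables (R : realType) (N m : nat) (S : 'I_m -> 'I_N * 'I_N) (a : 'I_m -> R).

Definition corr_functional (Phi : qmap R N) : R :=
  (m%:R)^-1 * \sum_(i < m) a i * fPhi Phi (S i).

Lemma corr_functional_comb_linear : comb_linear corr_functional.
Proof.
move=> s; rewrite /corr_functional.
under eq_bigr do rewrite fPhi_lincomb mulr_sumr.
rewrite exchange_big mulr_sumr; apply: eq_bigr => x _ /=.
rewrite mulrCA !mulr_sumr; apply: eq_bigr => i _.
by rewrite (mulrCA (a i)).
Qed.

Lemma corr_fPhi Phi : corr S a (fPhi Phi) = `|corr_functional Phi|.
Proof. by rewrite /corr normrM ger0_norm ?invr_ge0. Qed.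

End CorrelationFunctional.

Section FreeRobustnessBound.
Variables (R : realType) (N : nat) (O : set (qmap R N)) (Psi : qmap R N) (k : nat).
Hypotheses (O_ch : forall Phi, O Phi -> channel Phi)
  (O_comp : forall Phi1 Phi2, O Phi1 -> O Phi2 -> O (Phi1 \o Phi2))
  (Psi_ch : channel Psi) (Psi_fin : (robustness O Psi < +oo)%E).

Let O_lin Phi : O Phi -> is_linear_map Phi.
Proof. by move/O_ch => []. Qed.

(* gamma(Psi) is finite by hypothesis. *)
Let gamma : R := fine (robustness O Psi).

Let robustness_Psi : robustness O Psi = gamma%:E.
Proof. by rewrite /gamma fineK // ge0_fin_numE // robustness_ge0. Qed.

Let gamma_ge0 : 0 <= gamma.
Proof. by rewrite -lee_fin -robustness_Psi robustness_ge0. Qed.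

Lemma Ok_bound_robustness (L : qmap R N -> R) A Phi : 0 <= A -> comb_linear L ->
  (forall Phi', O Phi' -> `|L Phi'| <= A) ->
  Ok O Psi k Phi -> `|L Phi| <= (1 + 2 * gamma) ^+ k * A.
Proof.
move=> A0 L_lin L_A OkPhi; apply: functional_bound_pow A0 L_lin L_A _ => c c_gt.
have c1 : 1 <= c by apply: le_trans (ltW c_gt); rewrite lerDl mulr_ge0.
apply: (decomposable_Ok O_lin O_comp c1 _ OkPhi).
by apply: decomposable_of_robustness_le c_gt; rewrite robustness_Psi.
Qed.

Lemma Ok_bound_gamma_max (L : qmap R N -> R) A Phi G : gamma_max O = G%:E ->
  0 <= A -> comb_linear L -> (forall Phi', O Phi' -> `|L Phi'| <= A) ->
  Ok O Psi k Phi -> `|L Phi| <= (1 + 2 * G) * A.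
Proof.
move=> gmax A0 L_lin L_A OkPhi; rewrite -[1 + 2 * G]expr1.
apply: functional_bound_pow A0 L_lin L_A _ => c c_gt; rewrite expr1.
apply: decomposable_of_robustness_le c_gt; rewrite -gmax.
by apply: ereal_sup_ubound; exists Phi => //; exact: Ok_channel OkPhi.
Qed.

Lemma gamma_star_bound : exists g, [/\ gamma_star O Psi k = g%:E, 1 <= g &
  forall (L : qmap R N -> R) A Phi, 0 <= A -> comb_linear L ->
    (forall Phi', O Phi' -> `|L Phi'| <= A) ->
    Ok O Psi k Phi -> `|L Phi| <= g * A].
Proof.
have Psi_max : (robustness O Psi <= gamma_max O)%E.
  by apply: ereal_sup_ubound; exists Psi.
have pow_ge1 : 1 <= (1 + 2 * gamma) ^+ k by rewrite exprn_ege1 // lerDl mulr_ge0.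
case gmax : (gamma_max O) Psi_max => [G||] Psi_max.
- have gamma_G : gamma <= G by rewrite -lee_fin -robustness_Psi.
  exists (Num.min ((1 + 2 * gamma) ^+ k) (1 + 2 * G)); split.
  + by rewrite /gamma_star gmax -EFin_min.
  + by rewrite le_min pow_ge1 lerDl mulr_ge0 // (le_trans gamma_ge0 gamma_G).
  + move=> L A Phi A0 L_lin L_A OkPhi; rewrite /Num.min; case: ifP => _.
      exact: Ok_bound_robustness.
    exact: Ok_bound_gamma_max gmax A0 L_lin L_A OkPhi.
- exists ((1 + 2 * gamma) ^+ k); split => //.
  + by rewrite /gamma_star gmax gt0_muley ?lte_fin // addey // real_miney.
  + by move=> *; exact: Ok_bound_robustness.
- by have := le_trans (robustness_ge0 _ _) Psi_max.
Qed.

End FreeRobustnessBound.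

Theorem mainTheorem12 (R : realType) (n : nat) (O : set (qmap R (2 ^ n)))
  (Psi : qmap R (2 ^ n)) (k m : nat) (S : 'I_m -> 'I_(2 ^ n) * 'I_(2 ^ n)) :
  O !=set0 ->
  (forall Phi, O Phi -> channel Phi) ->
  (forall Phi1 Phi2, O Phi1 -> O Phi2 -> O (Phi1 \o Phi2)) ->
  channel Psi ->
  (robustness O Psi < +oo)%E ->
  [/\ (rademacher S (Fcls O) <= rademacher S (Fcls (Ok O Psi k)))%E,
      (rademacher S (Fcls (Ok O Psi k)) <= gamma_star O Psi k * rademacher S (Fcls O))%E,
      (gaussian S (Fcls O) <= gaussian S (Fcls (Ok O Psi k)))%E &
      (gaussian S (Fcls (Ok O Psi k)) <= gamma_star O Psi k * gaussian S (Fcls O))%E].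
Proof.
move=> O0 O_ch O_comp Psi_ch Psi_fin.
have [g [-> g1 Ok_bound]] := gamma_star_bound k O_ch O_comp Psi_ch Psi_fin.
have g0 : 0 < g := lt_le_trans ltr01 g1.
have FO0 : Fcls O !=set0 by case: O0 => Phi OPhi; exists (fPhi Phi), Phi.
have FO_Ok : Fcls O `<=` Fcls (Ok O Psi k).
  by move=> _ [Phi OPhi <-]; exists Phi => //; exact: free_in_Ok.
have sup_le a : (sup_corr S a (Fcls (Ok O Psi k)) <= g%:E * sup_corr S a (Fcls O))%E.
  apply: sup_corr_le_scale FO0 g0 _ => _ [Phi OkPhi <-] A A0 A_bound.
  rewrite corr_fPhi; apply: Ok_bound OkPhi => //.
    exact: corr_functional_comb_linear.
  by move=> Phi' OPhi'; rewrite -corr_fPhi; apply: A_bound; exists Phi'.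
have [rad_lo rad_hi] := rademacher_sandwich FO0 FO_Ok sup_le.
have [gau_lo gau_hi] := gaussian_sandwich FO0 FO_Ok g0 sup_le.
by split.
Qed.
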